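(* Let $R$ be a commutative ring containing a regular element $x$. Then $FP\text{-}\mathrm{id}_R(R)=FP\text{-}\mathrm{id}_{R\bowtie xR}(R\bowtie xR)$.
   Context: All rings are commutative with identity. $R\bowtie xR:=\{(r,r+xs)\mid r,s\in R\}$, a subring of $R\times R$ with componentwise operations. A regular element is a non-zerodivisor. For a module $M$ over a ring $A$, the $FP$-injective dimension $FP\text{-}\mathrm{id}_A(M)$ is the least integer $n\ge 0$ such that $\mathrm{Ext}^{n+1}_A(P,M)=0$ for every finitely presented $A$-module $P$ (or $\infty$ if none exists). *)

From HB Require Import structures.
From mathcomp Require Import all_boot all_order all_algebra.
From Stdlib Require Import ClassicalEpsilon.

Set Implicit Arguments.
Unset Strict Implicit.
Unset Printing Implicit Defensive.

Import GRing.Theory.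
Local Open Scope ring_scope.

Definition regular_elt (R : comPzRingType) (x : R) : Prop :=
  forall y : R, x * y = 0 -> y = 0.

Section Bowtie.
Variables (R : comPzRingType) (x : R).

Definition in_bowtie (p : R * R) : Prop := exists r s : R, p = (r, r + x * s).

Definition bowtie_pred : pred (R * R) :=
  fun p => if excluded_middle_informative (in_bowtie p) then true else false.

Lemma bowtie_predP p : reflect (in_bowtie p) (bowtie_pred p).
Proof.
rewrite /bowtie_pred; case: excluded_middle_informative => H.
  by constructor. by constructor.
Qed.

Lemma bowtie_subring_closed : subring_closed bowtie_pred.
Proof.
split.
- apply/bowtie_predP; exists 1, 0; by rewrite mulr0 addr0.
- move=> p q /bowtie_predP [r [s ->]] /bowtie_predP [r' [s' ->]].
  apply/bowtie_predP; exists (r - r'), (s - s').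
  rewrite mulrBr; congr (_, _) => /=.
  by rewrite opprD addrACA.
- move=> p q /bowtie_predP [r [s ->]] /bowtie_predP [r' [s' ->]].
  apply/bowtie_predP; exists (r * r'), (r * s' + s * r' + x * s * s').
  congr (_, _) => /=.
  rewrite mulrDl !mulrDr -!addrA; congr (_ + _).
  rewrite !mulrA [r * x]mulrC -!mulrA; congr (_ + (_ + _)).
  by rewrite [s * (x * _)]mulrCA.
Qed.

Record bowtie := Bowtie { bowtie_val : R * R; bowtie_valP : bowtie_pred bowtie_val }.

HB.instance Definition _ := [isSub for bowtie_val].
HB.instance Definition _ := [Choice of bowtie by <:].
HB.instance Definition _ :=
  GRing.SubChoice_isSubComPzRing.Build _ _ bowtie bowtie_subring_closed.

End Bowtie.

Section Homological.
Variable A : pzRingType.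

Definition exact_at (U V W : lmodType A) (f : U -> V) (g : V -> W) : Prop :=
  forall v : V, g v = 0 <-> exists u : U, f u = v.

Definition projective_mod (F : lmodType A) : Prop :=
  forall (U V : lmodType A) (p : {linear U -> V}) (h : {linear F -> V}),
    (forall v : V, exists u : U, p u = v) ->
    exists h' : {linear F -> U}, forall z : F, p (h' z) = h z.

Definition fin_presented (P : lmodType A) : Prop :=
  exists (m1 m0 : nat) (a : {linear 'rV[A]_m1 -> 'rV[A]_m0})
         (b : {linear 'rV[A]_m0 -> P}),
    (forall z : P, exists v, b v = z) /\ exact_at a b.

Definition proj_resolution (P : lmodType A) (F : nat -> lmodType A)
    (d : forall i, {linear F i.+1 -> F i}) (eps : {linear F 0%N -> P}) : Prop :=
  [/\ forall i, projective_mod (F i),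
      forall z : P, exists v, eps v = z,
      exact_at (d 0%N) eps &
      forall i, exact_at (d i.+1) (d i)].

(* Ext^{n+1}_A(P, M) = 0, computed as the (n+1)-st cohomology of
   Hom_A(F_•, M) for a projective resolution F_• of P (the result being
   independent of the resolution, we require it for all of them). *)
Definition Ext_succ_vanishes (n : nat) (P M : lmodType A) : Prop :=
  forall (F : nat -> lmodType A) (d : forall i, {linear F i.+1 -> F i})
         (eps : {linear F 0%N -> P}),
    proj_resolution d eps ->
    forall f : {linear F n.+1 -> M},
      (forall z : F n.+2, f (d n.+1 z) = 0) ->
      exists g : {linear F n -> M}, forall z : F n.+1, f z = g (d n z).

Definition FPid_le (M : lmodType A) (n : nat) : Prop :=
  forall P : lmodType A, fin_presented P -> Ext_succ_vanishes n P M.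

(* FP-id_A(M) = n  (n finite); FP-id_A(M) = oo iff no n satisfies this *)
Definition FPid_is (M : lmodType A) (n : nat) : Prop :=
  FPid_le M n /\ forall m : nat, (m < n)%N -> ~ FPid_le M m.

End Homological.

From HB Require Import structures.
From mathcomp Require Import all_boot all_order all_algebra.
From mathcomp Require Import ring.

(* Let S := R ⋈ xR with x regular.  S is free as an R-module on 1 and
   e := (0, x), with e^2 = x e, and the coordinates alpha s, beta s of
   s = alpha s + beta s e are well defined because x is regular.
   We compare R- and S-modules through two functors:
   - restriction of scalars along the diagonal R -> S (for any ring map);
   - extension of scalars S ⊗_R M, realised on M × M, which is both left and
     right adjoint to restriction (S is a Frobenius R-algebra).
   Both are exact and preserve projectivity and finite presentation, hence
   carry projective resolutions of finitely presented modules to such.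
   An S-valued cocycle is turned into an R-valued one by the form beta, and
   composing with beta is a bijection Hom_S(F, S) -> Hom_R(F, R) (Frobenius
   reciprocity); an R-valued cocycle on F extends to one on S ⊗_R F with
   values in S ⊗_R R = S.  So FP-id_R(R) <= n iff FP-id_S(S) <= n for all n,
   which is the theorem. *)

Set Implicit Arguments.
Unset Strict Implicit.
Unset Printing Implicit Defensive.

Import GRing.Theory.
Local Open Scope ring_scope.

Lemma can_linear (A : pzRingType) (U V : lmodType A) (f : {linear U -> V})
    (g : V -> U) :
  cancel f g -> cancel g f -> linear g.
Proof. by move=> fK gK a u v; apply: (can_inj fK); rewrite linearP !gK. Qed.

Lemma fin_presented_from (A : pzRingType) (m1 m0 : nat) (B1 B0 P : lmodType A)
    (a : {linear B1 -> B0}) (b : {linear B0 -> P})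
    (c1 : {linear 'rV[A]_m1 -> B1}) (c0 : {linear 'rV[A]_m0 -> B0})
    (c0' : {linear B0 -> 'rV[A]_m0}) :
  (forall z, exists v, b v = z) -> exact_at a b ->
  (forall z, exists v, c1 v = z) -> cancel c0 c0' -> cancel c0' c0 ->
  fin_presented P.
Proof.
move=> b_surj ab_exact c1_surj c0K c0'K.
exists m1, m0, (c0' \o a \o c1 : {linear _ -> _}), (b \o c0 : {linear _ -> _}).
split=> [z | v /=].
  by have [v <-] := b_surj z; exists (c0' v); rewrite /= c0'K.
split=> [/(ab_exact (c0 v)).1 [w aw] | [u <-]]; last first.
  by rewrite /= c0'K; apply/(ab_exact _).2; exists (c1 u).
by have [u c1u] := c1_surj w; exists u; rewrite /= c1u aw c0K.
Qed.

Definition restrict (A B : pzRingType) (_ : {rmorphism A -> B})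
  (M : lmodType B) : Type := M.

Section RestrictScalars.
Variables (A B : pzRingType) (f : {rmorphism A -> B}).

Section Module.
Variable M : lmodType B.
HB.instance Definition _ := GRing.Zmodule.on (restrict f M).

Definition restrict_scale (a : A) (m : restrict f M) : restrict f M :=
  f a *: (m : M).

Fact restrict_scaleA a b m :
  restrict_scale a (restrict_scale b m) = restrict_scale (a * b) m.
Proof. by rewrite /restrict_scale scalerA rmorphM. Qed.
Fact restrict_scale1 : left_id 1 restrict_scale.
Proof. by move=> m; rewrite /restrict_scale rmorph1 scale1r. Qed.
Fact restrict_scaleDr : right_distributive restrict_scale +%R.
Proof. by move=> a u v; rewrite /restrict_scale scalerDr. Qed.
Fact restrict_scaleDl m : {morph restrict_scale^~ m : a b / a + b}.
Proof. by move=> a b; rewrite /restrict_scale rmorphD scalerDl. Qed.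

HB.instance Definition _ := GRing.Zmodule_isLmodule.Build A (restrict f M)
  restrict_scaleA restrict_scale1 restrict_scaleDr restrict_scaleDl.

Lemma restrictZ a (m : restrict f M) : a *: m = (f a *: (m : M) : M).
Proof. by []. Qed.
End Module.

Section Map.
Variables (U V : lmodType B) (g : {linear U -> V}).
Definition restrict_map : restrict f U -> restrict f V := g.
Fact restrict_map_linear : linear restrict_map.
Proof. by move=> a u v; rewrite /restrict_map !restrictZ linearP. Qed.
HB.instance Definition _ := GRing.isLinear.Build A (restrict f U) (restrict f V)
  _ restrict_map restrict_map_linear.
End Map.
End RestrictScalars.

Arguments restrict_map {A B} f {U V} g.

Section BowtieCoordinates.
Variables (R : comPzRingType) (x : R).
Local Notation S := (bowtie x).

Fact diag_subproof (r : R) : bowtie_pred x (r, r).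
Proof. by apply/bowtie_predP; exists r, 0; rewrite mulr0 addr0. Qed.
Definition diag (r : R) : S := Bowtie (diag_subproof r).

Fact diag_is_zmod_morphism : zmod_morphism diag.
Proof. by move=> a b; apply: val_inj. Qed.
Fact diag_is_monoid_morphism : monoid_morphism diag.
Proof. by split=> [|a b]; apply: val_inj. Qed.
HB.instance Definition _ := GRing.isZmodMorphism.Build R S diag
  diag_is_zmod_morphism.
HB.instance Definition _ := GRing.isMonoidMorphism.Build R S diag
  diag_is_monoid_morphism.

Fact ee_subproof : bowtie_pred x (0, x).
Proof. by apply/bowtie_predP; exists 0, 1; rewrite mulr1 add0r. Qed.
Definition ee : S := Bowtie ee_subproof.

Definition bpair (a b : R) : S := diag a + diag b * ee.

Lemma val_bpair a b : val (bpair a b) = (a, a + x * b).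
Proof. by congr (_, _); rewrite /= ?mulr0 ?addr0 // mulrC. Qed.

Lemma bpairD a b c d : bpair a b + bpair c d = bpair (a + c) (b + d).
Proof. by rewrite /bpair !rmorphD mulrDl addrACA. Qed.

(* The multiplication rule, coming from e^2 = x e. *)
Lemma bpairM a b c d :
  bpair a b * bpair c d = bpair (a * c) (a * d + b * c + x * b * d).
Proof.
apply: val_inj; rewrite rmorphM !val_bpair; congr (_, _) => /=; ring.
Qed.

Lemma diagE r : diag r = bpair r 0.
Proof. by rewrite /bpair rmorph0 mul0r addr0. Qed.
Lemma eeE : ee = bpair 0 1.
Proof. by rewrite /bpair rmorph0 rmorph1 mul1r add0r. Qed.

Lemma ee_sq : ee * ee = diag x * ee.
Proof. by rewrite eeE diagE !bpairM; congr bpair; ring. Qed.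

(* Two instances of the multiplication rule: R-scaling, and the action
   of a + b e on the pair (c, d) used for extension of scalars. *)
Lemma bpair_scaleD r a b c d :
  diag r * bpair a b + bpair c d = bpair (r * a + c) (r * b + d).
Proof. by rewrite diagE bpairM bpairD; congr bpair; ring. Qed.

Lemma bpair_act a b c d :
  bpair (a * c) (b * c + (a + x * b) * d) = bpair a b * bpair c d.
Proof. by rewrite bpairM; congr bpair; ring. Qed.

Variant bowtie_spec : S -> Prop := BowtieSpec a b : bowtie_spec (bpair a b).

Lemma bowtieP s : bowtie_spec s.
Proof.
have [r [t val_s]] : in_bowtie x (val s) by apply/bowtie_predP/valP.
suff -> : s = bpair r t by [].
by apply: val_inj; rewrite val_bpair val_s.
Qed.

(* The coordinates of s in the basis (1, e); the second one is well defined
   only when x is regular. *)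
Definition alpha (s : S) : R := (val s).1.
Lemma alpha_bpair a b : alpha (bpair a b) = a.
Proof. by rewrite /alpha val_bpair. Qed.

Fact beta_subproof (s : S) : exists b, (val s).2 == (val s).1 + x * b.
Proof. by case: s / bowtieP => a b; exists b; rewrite val_bpair. Qed.
Definition beta (s : S) : R := xchoose (beta_subproof s).

Lemma bowtie_linear (U V : lmodType S) (f : U -> V) :
    {morph f : u v / u + v} ->
    (forall r u, f (diag r *: u) = diag r *: f u) ->
    (forall u, f (ee *: u) = ee *: f u) ->
  linear f.
Proof.
move=> fD f_diag f_ee s u v; rewrite fD; congr (_ + _).
case: s / bowtieP => a b.
by rewrite /bpair scalerDl fD -scalerA f_diag f_diag f_ee scalerA -scalerDl.
Qed.

Hypothesis hx : regular_elt x.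

Lemma beta_bpair a b : beta (bpair a b) = b.
Proof.
have /eqP := xchooseP (beta_subproof (bpair a b)).
rewrite -/(beta _) val_bpair /= => /addrI /eqP.
by rewrite -subr_eq0 -mulrBr => /eqP /hx /eqP; rewrite subr_eq0 => /eqP.
Qed.

Lemma bowtie_eq s t : alpha s = alpha t -> beta s = beta t -> s = t.
Proof.
case: s / bowtieP => a b; case: t / bowtieP => c d.
by rewrite !alpha_bpair !beta_bpair => -> ->.
Qed.
End BowtieCoordinates.

(* Extension of scalars  S ⊗_R M = M ⊕ M e  for S := R ⋈ xR, on pairs: the
   element a + b e acts by
     (a + b e)(m1 + m2 e) = a m1 + (b m1 + (a + x b) m2) e.
   The action uses the coordinates of S and is lawful only for regular x, so the
   carrier records the regularity proof. *)
Definition ext (R : comPzRingType) (x : R) (_ : regular_elt x)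
  (M : lmodType R) : Type := (M * M)%type.

Section Extension.
Variables (R : comPzRingType) (x : R) (hx : regular_elt x).
Local Notation S := (bowtie x).

Section Module.
Variable M : lmodType R.
HB.instance Definition _ := GRing.Zmodule.on (ext hx M).

Definition ext_scale (s : S) (m : ext hx M) : ext hx M :=
  (alpha s *: m.1, beta s *: m.1 + (alpha s + x * beta s) *: m.2).

Lemma ext_scale_bpair a b (m : ext hx M) :
  ext_scale (bpair x a b) m = (a *: m.1, b *: m.1 + (a + x * b) *: m.2).
Proof. by rewrite /ext_scale alpha_bpair (beta_bpair hx). Qed.

Fact ext_scaleA s t m : ext_scale s (ext_scale t m) = ext_scale (s * t) m.
Proof.
case: s / bowtieP => a b; case: t / bowtieP => c d.
rewrite bpairM !ext_scale_bpair /= !scalerA; congr (_, _).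
rewrite !scalerDr !scalerA addrA -!scalerDl; congr (_ *: _ + _ *: _); ring.
Qed.
Fact ext_scale1 : left_id 1 ext_scale.
Proof.
case=> m1 m2; have -> : 1 = bpair x 1 0 by rewrite -diagE rmorph1.
by rewrite ext_scale_bpair scale0r add0r mulr0 addr0 !scale1r.
Qed.
Fact ext_scaleDr : right_distributive ext_scale +%R.
Proof.
by move=> s [m1 m2] [n1 n2]; rewrite /ext_scale /= !scalerDr addrACA.
Qed.
Fact ext_scaleDl m : {morph ext_scale^~ m : s t / s + t}.
Proof.
move=> s t; case: s / bowtieP => a b; case: t / bowtieP => c d.
rewrite bpairD !ext_scale_bpair /=; congr (_, _); first by rewrite scalerDl.
by rewrite addrACA -!scalerDl; congr (_ *: _ + _ *: _); ring.
Qed.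

HB.instance Definition _ := GRing.Zmodule_isLmodule.Build S (ext hx M)
  ext_scaleA ext_scale1 ext_scaleDr ext_scaleDl.

Lemma extZ_bpair a b (m : ext hx M) :
  bpair x a b *: m = (a *: m.1, b *: m.1 + (a + x * b) *: m.2).
Proof. exact: ext_scale_bpair. Qed.

Lemma extZ_diag r (m : ext hx M) : diag x r *: m = (r *: m.1, r *: m.2).
Proof. by rewrite diagE extZ_bpair scale0r add0r mulr0 addr0. Qed.

Lemma extZ_ee (m : ext hx M) : ee x *: m = (0, m.1 + x *: m.2).
Proof. by rewrite eeE extZ_bpair scale0r scale1r add0r mulr1. Qed.
End Module.

Section Map.
Variables (U V : lmodType R) (g : {linear U -> V}).
Definition ext_map (u : ext hx U) : ext hx V := (g u.1, g u.2).
Fact ext_map_linear : linear ext_map.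
Proof.
move=> s [u1 u2] [v1 v2]; case: s / bowtieP => a b.
by rewrite /ext_map !extZ_bpair /= !linearD !linearZ.
Qed.
HB.instance Definition _ := GRing.isLinear.Build S (ext hx U) (ext hx V) _
  ext_map ext_map_linear.

Lemma ext_map_surj :
  (forall v, exists u, g u = v) -> forall v, exists u, ext_map u = v.
Proof.
move=> g_surj [v1 v2]; have [u1 <-] := g_surj v1; have [u2 <-] := g_surj v2.
by exists (u1, u2).
Qed.
End Map.

Lemma ext_map_exact (U V W : lmodType R) (f : {linear U -> V})
    (g : {linear V -> W}) :
  exact_at f g -> exact_at (ext_map f) (ext_map g).
Proof.
move=> fg [v1 v2]; split=> [gv0 | [[u1 u2] <-]].
  have [u1 <-] := (fg v1).1 (congr1 fst gv0).
  have [u2 <-] := (fg v2).1 (congr1 snd gv0).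
  by exists (u1, u2).
have gf0 u : g (f u) = 0 by apply/(fg _).2; exists u.
by rewrite /ext_map /= !gf0.
Qed.

Section Unit.
Variable M : lmodType R.
Definition ext_unit (m : M) : restrict (diag x) (ext hx M) := (m, 0).
Fact ext_unit_linear : linear ext_unit.
Proof.
move=> r u v; rewrite /ext_unit restrictZ extZ_diag scaler0.
by congr pair; rewrite /= addr0.
Qed.
HB.instance Definition _ := GRing.isLinear.Build R M _ _ ext_unit
  ext_unit_linear.

Lemma ext_linear_eq (V : lmodType S) (g h : {linear ext hx M -> V}) :
  (forall m, g (m, 0) = h (m, 0)) -> forall m, g m = h m.
Proof.
have split_m (m : ext hx M) : m = (m.1, 0) + ee x *: ((m.2, 0) : ext hx M).
  case: m => m1 m2; rewrite extZ_ee /= scaler0 addr0.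
  by congr pair; rewrite /= (addr0, add0r).
by move=> gh m; rewrite (split_m m) !linearD !linearZ /= !gh.
Qed.
End Unit.

Section Counit.
Variable M : lmodType R.
Definition ext_counit (m : restrict (diag x) (ext hx M)) : M := m.2.
Fact ext_counit_linear : linear ext_counit.
Proof. by move=> r u v; rewrite /ext_counit restrictZ extZ_diag. Qed.
HB.instance Definition _ := GRing.isLinear.Build R _ M _ ext_counit
  ext_counit_linear.
End Counit.

(* Extension of scalars is left adjoint to restriction: an R-linear map
   M -> U into an S-module extends S-linearly to S ⊗_R M. *)
Section Lift.
Variables (M : lmodType R) (U : lmodType S).
Variable k : {linear M -> restrict (diag x) U}.
Definition ext_lift (m : ext hx M) : U := (k m.1 : U) + ee x *: (k m.2 : U).

Fact ext_lift_linear : linear ext_lift.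
Proof.
have k_diag r m : (k (r *: m) : U) = diag x r *: (k m : U) by rewrite linearZ.
apply: bowtie_linear => [[u1 u2] [v1 v2] | r [m1 m2] | [m1 m2]].
- by rewrite /ext_lift /= !linearD addrACA.
- by rewrite /ext_lift extZ_diag /= !k_diag scalerDr !scalerA mulrC.
rewrite /ext_lift extZ_ee /= linear0 add0r linearD k_diag !scalerDr !scalerA.
by rewrite ee_sq [diag x x * _]mulrC.
Qed.
HB.instance Definition _ := GRing.isLinear.Build S (ext hx M) U _ ext_lift
  ext_lift_linear.

Lemma ext_lift_unit m : ext_lift (m, 0) = k m.
Proof. by rewrite /ext_lift linear0 scaler0 addr0. Qed.
End Lift.

(* Extension of scalars is also right adjoint to restriction (S is a
   Frobenius R-algebra): an R-linear map  F -> V  out of an S-module lifts to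
   an S-linear map  F -> S ⊗_R V  whose e-coefficient is the given map. *)
Section Colift.
Variables (F : lmodType S) (V : lmodType R).
Variable h : {linear restrict (diag x) F -> V}.
Definition ext_colift (z : F) : ext hx V :=
  (h (ee x *: z : F) - x *: h z, h z).

Fact ext_colift_linear : linear ext_colift.
Proof.
have h_diag r (z : F) : h (diag x r *: z : F) = r *: h z by rewrite -linearZ.
apply: bowtie_linear => [u v | r z | z]; rewrite /ext_colift.
- rewrite [ee x *: (u + v)]scalerDr linearD [h (u + v)]linearD.
  by rewrite scalerDr opprD addrACA.
- rewrite extZ_diag /= scalerA mulrC -scalerA !h_diag scalerBr !scalerA.
  by rewrite mulrC.
by rewrite extZ_ee /= scalerA ee_sq -scalerA h_diag subrr subrK.
Qed.
HB.instance Definition _ := GRing.isLinear.Build S F (ext hx V) _ ext_colift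
  ext_colift_linear.

Lemma ext_colift_counit z : ext_counit (ext_colift z) = h z.
Proof. by []. Qed.
End Colift.

End Extension.

Arguments ext_unit {R x} hx {M}.
Arguments ext_counit {R x hx M}.

Section Transfer.
Variables (R : comPzRingType) (x : R) (hx : regular_elt x).
Local Notation S := (bowtie x).
Local Notation res := (restrict (diag x)).

(* Restriction and extension of scalars along R -> S preserve projectivity:
   each is a left adjoint of an exact functor. *)
Lemma restrict_projective (F : lmodType S) :
  projective_mod F -> projective_mod (res F).
Proof.
move=> F_proj U V p h p_surj.
have [k pk] := F_proj _ _ (ext_map p) (ext_colift hx h) (ext_map_surj p_surj).
exists (ext_counit \o restrict_map (diag x) k : {linear _ -> _}) => z /=.
by rewrite -[h z](ext_colift_counit hx) -pk.
Qed.

Lemma ext_projective (M : lmodType R) :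
  projective_mod M -> projective_mod (ext hx M).
Proof.
move=> M_proj U V p h p_surj.
have [k pk] := M_proj (res U) (res V) (restrict_map (diag x) p)
  (restrict_map (diag x) h \o ext_unit hx) p_surj.
exists (ext_lift k) => m.
apply: (ext_linear_eq (g := p \o ext_lift k)) => {}m /=.
by rewrite ext_lift_unit; apply: pk.
Qed.

Definition ext_regular (m : ext hx R^o) : S^o := bpair x m.1 m.2.
Fact ext_regular_linear : linear ext_regular.
Proof.
move=> s [a b] [c d]; case: s / bowtieP => u v.
rewrite /ext_regular extZ_bpair -[bpair x u v *: _]/(bpair x u v * bpair x a b).
by rewrite -bpair_act bpairD.
Qed.
HB.instance Definition _ := GRing.isLinear.Build S (ext hx R^o) S^o _
  ext_regular ext_regular_linear.

Definition alpha_map (s : res S^o) : R^o := alpha s.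
Fact alpha_map_linear : linear alpha_map.
Proof.
move=> r s t; case: s / bowtieP => a b; case: t / bowtieP => c d.
by rewrite /alpha_map restrictZ [_ *: _]/(_ * _) bpair_scaleD !alpha_bpair.
Qed.
HB.instance Definition _ := GRing.isLinear.Build R (res S^o) R^o _
  alpha_map alpha_map_linear.

Definition beta_map (s : res S^o) : R^o := beta s.
Fact beta_map_linear : linear beta_map.
Proof.
move=> r s t; case: s / bowtieP => a b; case: t / bowtieP => c d.
by rewrite /beta_map restrictZ [_ *: _]/(_ * _) bpair_scaleD !(beta_bpair hx).
Qed.
HB.instance Definition _ := GRing.isLinear.Build R (res S^o) R^o _
  beta_map beta_map_linear.

(* Frobenius reciprocity for S over R with the trace form beta: composing
   with beta is a bijection  Hom_S(F, S) -> Hom_R(F, R). *)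
Lemma frobenius_lift (F : lmodType S) (h : {linear res F -> R^o}) :
  exists g : {linear F -> S^o}, forall z, beta (g z) = h z.
Proof.
exists (ext_regular \o ext_colift hx h : {linear _ -> _}) => z.
by rewrite /= /ext_regular (beta_bpair hx).
Qed.

Lemma frobenius_eq (F : lmodType S) (g1 g2 : {linear F -> S^o}) :
  (forall z, beta (g1 z) = beta (g2 z)) -> forall z, g1 z = g2 z.
Proof.
have beta_ee (s : S) : beta (ee x * s) = alpha s + x * beta s.
  case: s / bowtieP => a b.
  by rewrite eeE bpairM !(beta_bpair hx) alpha_bpair; ring.
move=> g12 z; apply: (bowtie_eq hx); last exact: g12.
have := g12 (ee x *: z); rewrite !linearZ.
rewrite [X in beta X = _]/(ee x * g1 z) [X in _ = beta X]/(ee x * g2 z).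
by rewrite !beta_ee g12 => /addIr.
Qed.

Section FreeModules.
Variable m : nat.

Definition rows_join (v : 'rV[R]_(m + m)) : res 'rV[S]_m :=
  map2_mx (bpair x) (lsubmx v) (rsubmx v).
Definition rows_split (w : res 'rV[S]_m) : 'rV[R]_(m + m) :=
  row_mx (map_mx (@alpha _ x) w) (map_mx (@beta _ x) w).

Lemma rows_joinK : cancel rows_join rows_split.
Proof.
move=> v; rewrite /rows_split -[RHS]hsubmxK.
by congr row_mx; apply/rowP => j; rewrite !mxE ?alpha_bpair ?(beta_bpair hx).
Qed.
Lemma rows_splitK : cancel rows_split rows_join.
Proof.
move=> w; apply/rowP => j.
rewrite /rows_join /rows_split row_mxKl row_mxKr !mxE.
by case: (w 0 j) / bowtieP => a b; rewrite alpha_bpair (beta_bpair hx).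
Qed.

Fact rows_join_linear : linear rows_join.
Proof.
move=> r u v; apply/rowP => j.
by rewrite restrictZ /rows_join !mxE bpair_scaleD.
Qed.
HB.instance Definition _ := GRing.isLinear.Build R _ _ _ rows_join
  rows_join_linear.
HB.instance Definition _ := GRing.isLinear.Build R _ _ _ rows_split
  (can_linear rows_joinK rows_splitK).

Definition ext_rows_join (u : ext hx 'rV[R]_m) : 'rV[S]_m :=
  map2_mx (bpair x) u.1 u.2.
Definition ext_rows_split (w : 'rV[S]_m) : ext hx 'rV[R]_m :=
  (map_mx (@alpha _ x) w, map_mx (@beta _ x) w).

Lemma ext_rows_joinK : cancel ext_rows_join ext_rows_split.
Proof.
case=> u1 u2; rewrite /ext_rows_split; congr pair; apply/rowP => j;
  by rewrite !mxE ?alpha_bpair ?(beta_bpair hx).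
Qed.
Lemma ext_rows_splitK : cancel ext_rows_split ext_rows_join.
Proof.
move=> w; apply/rowP => j; rewrite !mxE /=.
by case: (w 0 j) / bowtieP => a b; rewrite alpha_bpair (beta_bpair hx).
Qed.

Fact ext_rows_join_linear : linear ext_rows_join.
Proof.
move=> s [u1 u2] [v1 v2]; case: s / bowtieP => a b; apply/rowP => j.
by rewrite extZ_bpair !mxE /= -bpair_act bpairD.
Qed.
HB.instance Definition _ := GRing.isLinear.Build S _ _ _ ext_rows_join
  ext_rows_join_linear.
HB.instance Definition _ := GRing.isLinear.Build S _ _ _ ext_rows_split
  (can_linear ext_rows_joinK ext_rows_splitK).
End FreeModules.

(* Finite presentation is preserved by restriction (S being free of rank 2
   over R) and by extension of scalars. *)
Lemma restrict_fin_presented (P : lmodType S) :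
  fin_presented P -> fin_presented (res P).
Proof.
case=> m1 [m0 [a [b [b_surj ab_exact]]]].
apply: (@fin_presented_from _ _ _ (res 'rV[S]_m1) (res 'rV[S]_m0) _
  (restrict_map (diag x) a) (restrict_map (diag x) b) (@rows_join m1)
  (@rows_join m0) (@rows_split m0) b_surj ab_exact _ (@rows_joinK m0)
  (@rows_splitK m0)).
by move=> w; exists (rows_split w); apply: rows_splitK.
Qed.

Lemma ext_fin_presented (N : lmodType R) :
  fin_presented N -> fin_presented (ext hx N).
Proof.
case=> m1 [m0 [a [b [b_surj ab_exact]]]].
apply: (fin_presented_from (a := ext_map a) (b := ext_map b)
  (c1 := @ext_rows_split m1) (c0 := @ext_rows_split m0)
  (c0' := @ext_rows_join m0) (ext_map_surj b_surj) (ext_map_exact ab_exact)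
  _ (@ext_rows_splitK m0) (@ext_rows_joinK m0)).
by move=> u; exists (ext_rows_join u); apply: ext_rows_joinK.
Qed.

Lemma restrict_resolution (P : lmodType S) (F : nat -> lmodType S)
    (d : forall i, {linear F i.+1 -> F i}) (eps : {linear F 0%N -> P}) :
  proj_resolution d eps ->
  proj_resolution (F := fun i => res (F i))
    (fun i => restrict_map (diag x) (d i)) (restrict_map (diag x) eps).
Proof.
by case=> F_proj eps_surj ex0 ex; split=> // i; apply: restrict_projective.
Qed.

Lemma ext_resolution (N : lmodType R) (F : nat -> lmodType R)
    (d : forall i, {linear F i.+1 -> F i}) (eps : {linear F 0%N -> N}) :
  proj_resolution d eps ->
  proj_resolution (F := fun i => ext hx (F i)) (fun i => ext_map (d i))
    (ext_map eps).
Proof.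
case=> F_proj eps_surj ex0 ex; split=> [i | | | i].
- exact: ext_projective.
- exact: ext_map_surj.
- exact: ext_map_exact.
- exact: ext_map_exact.
Qed.

(* FP-id_R(R) <= n implies FP-id_S(S) <= n: restrict a finitely presented
   S-module and its resolution to R, solve the cocycle problem for the
   R-valued form beta, and lift back by Frobenius reciprocity. *)
Lemma FPid_le_bowtie n : FPid_le (R^o : lmodType R) n -> FPid_le S^o n.
Proof.
move=> R_fpid P P_fp F d eps F_res f f_cocycle.
pose h := (beta_map \o restrict_map (diag x) f : {linear res (F n.+1) -> R^o}).
have h_cocycle z : h (restrict_map (diag x) (d n.+1) z) = 0.
  by rewrite /= f_cocycle (linear0 beta_map).
have [g0 g0_d] := R_fpid _ (restrict_fin_presented P_fp) _ _ _
  (restrict_resolution F_res) h h_cocycle.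
have [g beta_g] := frobenius_lift g0.
exists g; apply: (frobenius_eq (g2 := g \o d n : {linear _ -> _})) => z /=.
by rewrite beta_g -g0_d.
Qed.

(* FP-id_S(S) <= n implies FP-id_R(R) <= n: extend a finitely presented
   R-module and its resolution to S, solve the cocycle problem there and
   read off the first coordinate on the summand  M ⊂ S ⊗_R M. *)
Lemma FPid_le_base n : FPid_le S^o n -> FPid_le (R^o : lmodType R) n.
Proof.
move=> S_fpid N N_fp F d eps F_res f f_cocycle.
pose f' := (ext_regular \o ext_map f : {linear ext hx (F n.+1) -> S^o}).
have f'_cocycle z : f' (ext_map (d n.+1) z) = 0.
  by case: z => z1 z2; rewrite /= /ext_regular /= !f_cocycle -diagE rmorph0.
have [G G_d] := S_fpid _ (ext_fin_presented N_fp) _ _ _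
  (ext_resolution F_res) f' f'_cocycle.
exists (alpha_map \o restrict_map (diag x) G \o ext_unit hx : {linear _ -> _}).
move=> z; have := G_d (z, 0); rewrite /= /ext_regular /ext_map /= !linear0.
by move/(congr1 (@alpha _ x)); rewrite alpha_bpair.
Qed.

End Transfer.

(* Equality of extended-valued dimensions: for every n, one equals n iff the
   other does (both infinite iff neither equals any n). *)
Theorem lemma2p4 (R : comPzRingType) (x : R) (hx : regular_elt x) :
  forall n : nat,
    FPid_is (R^o : lmodType R) n <->
    FPid_is ((bowtie x)^o : lmodType (bowtie x)) n.
Proof.
move=> n; split=> -[le_n not_le_lt]; split.
- exact: FPid_le_bowtie.
- by move=> m lt_mn /(FPid_le_base hx); apply: not_le_lt.
- exact: FPid_le_base le_n.
- by move=> m lt_mn /(FPid_le_bowtie hx); apply: not_le_lt.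
Qed.
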